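(* Let $\mathfrak{N}$ be a pseudo-Euclidean 2-step nilpotent Lie algebra with center $\mathfrak{Z}$, let $(e_1,\ldots,e_p)$ be any basis of $\mathfrak{Z}$ with associated structure endomorphisms $(J_1,\ldots,J_p)$, and define the endomorphisms $$\mathcal{J}^-=\frac12\sum_{i,j=1}^p\langle e_i,e_j\rangle\, J_i\circ J_j,\qquad \mathcal{J}^+(u)=-\frac14\sum_{i,j=1}^p\langle e_i,u\rangle\,\mathrm{tr}(J_i\circ J_j)\,e_j,$$ and the bilinear forms $\mathfrak{r}^\pm(u,v)=\langle\mathcal{J}^\pm u,v\rangle$. Then the Ricci curvature $\mathfrak{r}$ of $\mathfrak{N}$ satisfies $\mathfrak{r}=\mathfrak{r}^++\mathfrak{r}^-$, and the scalar curvature $\mathfrak{s}$ satisfies $\mathfrak{s}=\frac12\mathrm{tr}\,\mathcal{J}^-=-\mathrm{tr}\,\mathcal{J}^+$.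
   Context: A pseudo-Euclidean Lie algebra is a finite-dimensional real Lie algebra $\mathfrak{g}$ with a nondegenerate symmetric bilinear form $\langle\cdot,\cdot\rangle$. Its Levi-Civita product $\mathcal{D}$ is defined by $2\langle\mathcal{D}_uv,w\rangle=\langle[u,v],w\rangle+\langle[w,u],v\rangle+\langle[w,v],u\rangle$; its curvature is $\mathcal{R}(u,v)w=\mathcal{D}_{[u,v]}w-\mathcal{D}_u\mathcal{D}_vw+\mathcal{D}_v\mathcal{D}_uw$; its Ricci curvature is $\mathfrak{r}(u,v)=\mathrm{tr}(w\mapsto\mathcal{R}(u,w)v)$; writing $\mathfrak{r}(u,v)=\langle\mathcal{J}u,v\rangle$, the scalar curvature is $\mathfrak{s}=\mathrm{tr}\,\mathcal{J}$. A Lie algebra $\mathfrak{N}$ is 2-step nilpotent if $[\mathfrak{N},\mathfrak{N}]\ne0$ and $[\mathfrak{N},\mathfrak{N}]\subset\mathfrak{Z}$ (the center). Given a basis $(e_1,\ldots,e_p)$ of $\mathfrak{Z}$, the structure endomorphisms $J_i$ are the $\langle\cdot,\cdot\rangle$-skew-symmetric endomorphisms with $[u,v]=\sum_i\langle J_iu,v\rangle e_i$; $\mathcal{J}^\pm$ do not depend on the choice of basis. *)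

(* Vectors of the n-dimensional real vector space are row
   vectors 'rV[R]_n; an endomorphism is a matrix A acting by u |-> u *m A,
   so the composite f \o g of endomorphisms with matrices F, G has matrix
   G *m F. *)
From HB Require Import structures.
From mathcomp Require Import all_boot all_order all_algebra.
Set Implicit Arguments. Unset Strict Implicit. Unset Printing Implicit Defensive.
Import Order.TTheory GRing.Theory Num.Theory.
Local Open Scope ring_scope.

Section Defs.
Variables (R : realFieldType) (n : nat).
Notation V := 'rV[R]_n.

Definition ip (g : 'M[R]_n) (u v : V) : R := (u *m g *m v^T) 0 0.

Definition ebasis (k : 'I_n) : V := delta_mx 0 k.

Definition lintr (f : V -> V) : R := \sum_(k < n) f (ebasis k) 0 k.

Definition curv (br D : V -> V -> V) (u v w : V) : V :=
  D (br u v) w - D u (D v w) + D v (D u w).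

Definition ricci (br D : V -> V -> V) (u v : V) : R :=
  lintr (fun w => curv br D u w v).

(* Ricci operator Jcal, i.e. the matrix with r(u,v) = <Jcal u, v>
   (for g invertible): Jcal = (r(e_a,e_b))_{a,b} * g^{-1} *)
Definition ricciOp (g : 'M[R]_n) (br D : V -> V -> V) : 'M[R]_n :=
  (\matrix_(a, b) ricci br D (ebasis a) (ebasis b)) *m invmx g.

Definition scal (g : 'M[R]_n) (br D : V -> V -> V) : R := \tr (ricciOp g br D).

Definition Jminus (g : 'M[R]_n) (p : nat) (e : 'I_p -> V) (J : 'I_p -> 'M[R]_n)
  : 'M[R]_n :=
  2^-1 *: \sum_(i < p) \sum_(j < p) ip g (e i) (e j) *: (J j *m J i).

(* J^+(u) = -1/4 sum_{i,j} <e_i,u> tr(J_i o J_j) e_j ; its matrix, using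
   u *m (g *m (e i)^T *m e j) = <u, e_i> e_j *)
Definition Jplus (g : 'M[R]_n) (p : nat) (e : 'I_p -> V) (J : 'I_p -> 'M[R]_n)
  : 'M[R]_n :=
  \sum_(i < p) \sum_(j < p)
     (- 4^-1 * \tr (J j *m J i)) *: (g *m (e i)^T *m e j).

End Defs.

(* Write D_u v = 1/2 ([u,v] - j(v) u - j(u) v), where j(z) = sum_i <e_i,z> J_i is
   characterised by <j(z) x, y> = <z, [x,y]>.  Since the J_i are skew they are
   traceless and kill the centre, so w |-> D_w y is traceless and the Ricci trace
   tr (w |-> D_[u,w] v - D_u D_w v + D_w D_u v) reduces to the traces of
   w |-> D_[u,w] v, [u, D_w v], j(D_w v) u and j(u) D_w v.  Each map is a sum of
   rank-one maps; the first three traces equal <J^- u, v> and the last one is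
   2 <J^+ u, v>.  Taking traces, tr J^+ = -1/2 tr J^- by symmetry of <,>. *)
From HB Require Import structures.
From mathcomp Require Import all_boot all_order all_algebra.
From mathcomp Require Import lra ring.
Set Implicit Arguments. Unset Strict Implicit. Unset Printing Implicit Defensive.
Import Order.TTheory GRing.Theory Num.Theory.
Local Open Scope ring_scope.

Section Form.
Variables (R : realFieldType) (n : nat) (g : 'M[R]_n).
Implicit Types (x y z w : 'rV[R]_n).

Lemma ipDl x y w : ip g (x + y) w = ip g x w + ip g y w.
Proof. by rewrite /ip !mulmxDl mxE. Qed.

Lemma ipZl a x w : ip g (a *: x) w = a * ip g x w.
Proof. by rewrite /ip -!scalemxAl mxE. Qed.

Lemma ipDr x y w : ip g w (x + y) = ip g w x + ip g w y.
Proof. by rewrite /ip linearD /= mulmxDr mxE. Qed.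

Lemma ipZr a x w : ip g w (a *: x) = a * ip g w x.
Proof. by rewrite /ip linearZ /= -scalemxAr mxE. Qed.

Lemma ip0l w : ip g 0 w = 0.
Proof. by rewrite /ip !mul0mx mxE. Qed.

Lemma ipNl x w : ip g (- x) w = - ip g x w.
Proof. by rewrite -scaleN1r ipZl mulN1r. Qed.

Lemma ipNr x w : ip g w (- x) = - ip g w x.
Proof. by rewrite -scaleN1r ipZr mulN1r. Qed.

Lemma ipBl x y w : ip g (x - y) w = ip g x w - ip g y w.
Proof. by rewrite ipDl ipNl. Qed.

Lemma ipBr x y w : ip g w (x - y) = ip g w x - ip g w y.
Proof. by rewrite ipDr ipNr. Qed.

Lemma ip_suml I (r : seq I) (P : pred I) (F : I -> 'rV[R]_n) w :
  ip g (\sum_(i <- r | P i) F i) w = \sum_(i <- r | P i) ip g (F i) w.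
Proof. by rewrite /ip !mulmx_suml summxE. Qed.

Lemma ip_sumr I (r : seq I) (P : pred I) (F : I -> 'rV[R]_n) w :
  ip g w (\sum_(i <- r | P i) F i) = \sum_(i <- r | P i) ip g w (F i).
Proof. by rewrite /ip raddf_sum mulmx_sumr summxE. Qed.

Lemma ip_linear_r x : forall a y z, ip g x (a *: y + z) = a * ip g x y + ip g x z.
Proof. by move=> a y z; rewrite ipDr ipZr. Qed.

Lemma ip_rank1_mx x y z w : ip g (x *m (g *m y^T *m z)) w = ip g x y * ip g z w.
Proof. by rewrite !mulmxA [x *m g *m y^T]mx11_scalar mul_scalar_mx ipZl. Qed.

Lemma mxtrace_rank1_mx y z : \tr (g *m y^T *m z) = ip g z y.
Proof. by rewrite mxtrace_mulC mulmxA /mxtrace big_ord1. Qed.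

End Form.

Lemma delta_quadE (R : ringType) n (X : 'M[R]_n) i j :
  ((delta_mx 0 i : 'rV[R]_n) *m X *m (delta_mx 0 j : 'rV[R]_n)^T) 0 0 = X i j.
Proof. by rewrite -rowE trmx_delta -colE !mxE. Qed.

Lemma quad_mx_inj (R : ringType) n (X Y : 'M[R]_n) :
  (forall x y : 'rV_n, (x *m X *m y^T) 0 0 = (x *m Y *m y^T) 0 0) -> X = Y.
Proof. by move=> XY; apply/matrixP => i j; rewrite -[X i j]delta_quadE -[Y i j]delta_quadE XY. Qed.

Section Metric.
Variables (R : realFieldType) (n : nat) (g : 'M[R]_n).
Hypotheses (g_sym : g^T = g) (g_nondeg : g \in unitmx).
Implicit Types (x y z w : 'rV[R]_n).

Lemma ipC x y : ip g x y = ip g y x.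
Proof.
rewrite /ip; transitivity (((x *m g *m y^T)^T) 0 0); first by rewrite [in RHS]mxE.
by rewrite !trmx_mul trmxK g_sym mulmxA.
Qed.

Lemma ip_injl x y : (forall w, ip g x w = ip g y w) -> x = y.
Proof.
move=> xy; apply/eqP; rewrite -subr_eq0; apply/eqP.
have xyg0 : (x - y) *m g = 0.
  apply/matrixP => i j; rewrite [i]ord1 [RHS]mxE.
  have -> : ((x - y) *m g) 0 j = ip g (x - y) (delta_mx 0 j).
    by rewrite /ip trmx_delta -colE !mxE.
  by rewrite ipBl xy subrr.
by rewrite -(mulmxK g_nondeg (x - y)) xyg0 mul0mx.
Qed.

Lemma mxtrace_skew (M : 'M[R]_n) :
  (forall x y, ip g (x *m M) y = - ip g x (y *m M)) -> \tr M = 0.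
Proof.
move=> M_skew.
have gMT : M *m g = - (g *m M^T).
  apply: quad_mx_inj => x y.
  rewrite mulmxA -/(ip g (x *m M) y) M_skew mulmxN mulNmx mxE.
  by rewrite /ip trmx_mul !mulmxA.
have : \tr M = - \tr M.
  rewrite -{1}(mulmxK g_nondeg M) gMT mulNmx -mulmxA raddfN /= mxtrace_mulC.
  by rewrite -mulmxA mulVmx // mulmx1 mxtrace_tr.
by move=> trN; lra.
Qed.

Lemma ricciOp_eq (br D : 'rV[R]_n -> 'rV[R]_n -> 'rV[R]_n) (M : 'M[R]_n) :
  (forall u v, ricci br D u v = ip g (u *m M) v) -> ricciOp g br D = M.
Proof.
move=> ricciM; rewrite /ricciOp.
suff -> : \matrix_(a, b) ricci br D (ebasis R a) (ebasis R b) = M *m g.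
  by rewrite mulmxK.
apply/matrixP => a b; rewrite mxE ricciM /ip /ebasis.
by rewrite -(mulmxA _ M g) delta_quadE.
Qed.

End Metric.

Section LinearTrace.
Variables (R : realFieldType) (n : nat).
Implicit Types (f h : 'rV[R]_n -> 'rV[R]_n).

Lemma eq_lintr f h : f =1 h -> lintr f = lintr h.
Proof. by move=> fh; apply: eq_bigr => k _; rewrite fh. Qed.

Lemma lintrD f h : lintr (fun w => f w + h w) = lintr f + lintr h.
Proof. by rewrite /lintr -big_split; apply: eq_bigr => k _; rewrite mxE. Qed.

Lemma lintrB f h : lintr (fun w => f w - h w) = lintr f - lintr h.
Proof. by rewrite /lintr -sumrB; apply: eq_bigr => k _; rewrite !mxE. Qed.

Lemma lintrZ a f : lintr (fun w => a *: f w) = a * lintr f.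
Proof. by rewrite /lintr mulr_sumr; apply: eq_bigr => k _; rewrite mxE. Qed.

Lemma lintr_sum p (F : 'I_p -> 'rV[R]_n -> 'rV[R]_n) :
  lintr (fun w => \sum_(i < p) F i w) = \sum_(i < p) lintr (F i).
Proof. by rewrite /lintr exchange_big; apply: eq_bigr => k _; rewrite summxE. Qed.

Lemma lintr_mx (M : 'M[R]_n) : lintr (fun w => w *m M) = \tr M.
Proof. by apply: eq_bigr => k _; rewrite /ebasis -rowE mxE. Qed.

Lemma lintr_rank1 (phi : 'rV[R]_n -> R) y :
  (forall a x z, phi (a *: x + z) = a * phi x + phi z) ->
  lintr (fun w => phi w *: y) = phi y.
Proof.
move=> phi_lin.
have phi0 : phi 0 = 0.
  by have := phi_lin (-1) 0 0; rewrite scaler0 addr0 mulN1r addNr.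
rewrite [in RHS](row_sum_delta y) /lintr.
elim/big_rec2: _ => [|k a b _ ->]; first by rewrite phi0.
by rewrite phi_lin mxE mulrC.
Qed.

End LinearTrace.

Section TwoStepNilpotent.
Variables (R : realFieldType) (n : nat) (g : 'M[R]_n).
Hypotheses (g_sym : g^T = g) (g_nondeg : g \in unitmx).
Variable br : 'rV[R]_n -> 'rV[R]_n -> 'rV[R]_n.
Hypothesis br_linl : forall (a : R) u v w, br (a *: u + v) w = a *: br u w + br v w.
Hypothesis br_linr : forall (a : R) u v w, br w (a *: u + v) = a *: br w u + br w v.
Hypothesis br_center : forall u v w, br (br u v) w = 0.
Variables (p : nat) (e : 'I_p -> 'rV[R]_n).
Hypothesis e_center : forall i w, br (e i) w = 0.
Hypothesis e_free : forall c : 'I_p -> R, \sum_(i < p) c i *: e i = 0 -> forall i, c i = 0.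
Variable J : 'I_p -> 'M[R]_n.
Hypothesis J_skew : forall i u v, ip g (u *m J i) v = - ip g u (v *m J i).
Hypothesis J_br : forall u v, br u v = \sum_(i < p) ip g (u *m J i) v *: e i.
Variable D : 'rV[R]_n -> 'rV[R]_n -> 'rV[R]_n.
Hypothesis D_def : forall u v w, 2 * ip g (D u v) w =
      ip g (br u v) w + ip g (br w u) v + ip g (br w v) u.

Implicit Types (x y z w u v : 'rV[R]_n).

Definition central z := forall w, br z w = 0.

Definition jmap z x := \sum_(i < p) ip g (e i) z *: (x *m J i).

Lemma central_mulJ z i : central z -> z *m J i = 0.
Proof.
move=> zZ; apply: (ip_injl g_nondeg) => w; rewrite ip0l.
by have := zZ w; rewrite J_br => /e_free; apply.
Qed.

Lemma ip_center_mulJ k x i : ip g (e k) (x *m J i) = 0.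
Proof.
apply/eqP; rewrite -oppr_eq0 -J_skew.
by rewrite (central_mulJ i (e_center k)) ip0l.
Qed.

Lemma ip_jmap z x y : ip g (jmap z x) y = ip g z (br x y).
Proof.
rewrite J_br /jmap ip_suml ip_sumr; apply: eq_bigr => i _.
by rewrite ipZl ipZr (ipC g_sym z) mulrC.
Qed.

Lemma ip_center_jmap k z x : ip g (e k) (jmap z x) = 0.
Proof. by rewrite /jmap ip_sumr big1 // => i _; rewrite ipZr ip_center_mulJ mulr0. Qed.

Lemma jmap_central z x : central x -> jmap z x = 0.
Proof. by move=> xZ; rewrite /jmap big1 // => i _; rewrite central_mulJ ?scaler0. Qed.

Lemma br_anti x y : br x y = - br y x.
Proof.
rewrite !J_br -sumrN; apply: eq_bigr => i _.
by rewrite J_skew (ipC g_sym x) scaleNr.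
Qed.

Lemma DE x y : D x y = 2^-1 *: (br x y - jmap y x - jmap x y).
Proof.
apply: (ip_injl g_nondeg) => w.
have := D_def x y w; rewrite (br_anti w x) (br_anti w y) !ipNl.
rewrite (ipC g_sym (br x w)) (ipC g_sym (br y w)) -!ip_jmap ipZl !ipBl.
by move=> D2; lra.
Qed.

Lemma D_linl a x x' y : D (a *: x + x') y = a *: D x y + D x' y.
Proof.
apply: (ip_injl g_nondeg) => w.
rewrite ipDl ipZl !DE !ipZl !ipBl !ip_jmap !br_linl !ipDl !ipZl ipDr ipZr; ring.
Qed.

Lemma D_central_l z v : central z -> D z v = - 2^-1 *: jmap z v.
Proof.
by move=> zZ; rewrite DE zZ jmap_central // subrr sub0r scalerN scaleNr.
Qed.

Lemma ip_center_D k x v : ip g (e k) (D x v) = 2^-1 * ip g (e k) (br x v).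
Proof. by rewrite DE ipZr !ipBr !ip_center_jmap !subr0. Qed.

Lemma ip_Jminus u v : ip g (u *m Jminus g e J) v =
  2^-1 * \sum_i \sum_j ip g (e i) (e j) * ip g (u *m J j *m J i) v.
Proof.
rewrite /Jminus -scalemxAr ipZl mulmx_sumr ip_suml; congr (_ * _).
apply: eq_bigr => i _; rewrite mulmx_sumr ip_suml; apply: eq_bigr => j _.
by rewrite -scalemxAr ipZl mulmxA.
Qed.

Lemma ip_Jplus u v : ip g (u *m Jplus g e J) v =
  \sum_i \sum_j - 4^-1 * \tr (J j *m J i) * (ip g (e i) u * ip g (e j) v).
Proof.
rewrite /Jplus mulmx_sumr ip_suml; apply: eq_bigr => i _.
rewrite mulmx_sumr ip_suml; apply: eq_bigr => j _.
by rewrite -scalemxAr ipZl ip_rank1_mx (ipC g_sym u).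
Qed.

Lemma lintr_D_l y : lintr (fun w => D w y) = 0.
Proof.
have tr_br : lintr (fun w => \sum_i ip g (w *m J i) y *: e i) = 0.
  rewrite lintr_sum big1 // => i _.
  rewrite lintr_rank1 /= ?central_mulJ ?ip0l // => a x z.
  by rewrite mulmxDl -scalemxAl ipDl ipZl.
have tr_jmap_l : lintr (fun w => \sum_i ip g (e i) y *: (w *m J i)) = 0.
  rewrite lintr_sum big1 // => i _.
  by rewrite lintrZ lintr_mx (mxtrace_skew g_nondeg (J_skew i)) mulr0.
have tr_jmap_r : lintr (fun w => \sum_i ip g (e i) w *: (y *m J i)) = 0.
  rewrite lintr_sum big1 // => i _.
  by rewrite lintr_rank1 /= ?ip_center_mulJ //; apply: ip_linear_r.
rewrite (eq_lintr (h := fun w => 2^-1 *: ((\sum_i ip g (w *m J i) y *: e i)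
   - (\sum_i ip g (e i) y *: (w *m J i)) - \sum_i ip g (e i) w *: (y *m J i)))).
  by rewrite lintrZ !lintrB tr_br tr_jmap_l tr_jmap_r !subrr mulr0.
by move=> w; rewrite DE J_br.
Qed.

Lemma lintr_D_br u v :
  lintr (fun w => D (br u w) v) = ip g (u *m Jminus g e J) v.
Proof.
rewrite (eq_lintr (h := fun w => - 2^-1 *: \sum_i ip g (e i) (br u w) *: (v *m J i)));
  last by move=> w; rewrite D_central_l.
rewrite lintrZ lintr_sum ip_Jminus mulNr -mulrN -sumrN; congr (_ * _).
apply: eq_bigr => i _; rewrite lintr_rank1; last first.
  by move=> a x z; rewrite br_linr ipDr ipZr.
rewrite J_br ip_sumr -sumrN; apply: eq_bigr => j _.
by rewrite ipZr (J_skew i (u *m J j)); ring.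
Qed.

Lemma lintr_br_D u v :
  lintr (fun w => br u (D w v)) = ip g (u *m Jminus g e J) v.
Proof.
rewrite (eq_lintr (h := fun w => \sum_i ip g (u *m J i) (D w v) *: e i));
  last by move=> w; rewrite J_br.
rewrite lintr_sum ip_Jminus [in RHS]exchange_big mulr_sumr; apply: eq_bigr => i _.
rewrite lintr_rank1; last by move=> a x z; rewrite D_linl ipDr ipZr.
rewrite D_central_l // ipZr /jmap ip_sumr mulNr -mulrN -sumrN; congr (_ * _).
by apply: eq_bigr => j _; rewrite ipZr (J_skew j (u *m J i)); ring.
Qed.

Lemma lintr_jmap_Dl u v :
  lintr (fun w => jmap (D w v) u) = ip g (u *m Jminus g e J) v.
Proof.
rewrite /jmap lintr_sum ip_Jminus [in RHS]exchange_big mulr_sumr.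
apply: eq_bigr => i _.
rewrite lintr_rank1; last by move=> a x z; rewrite D_linl ipDr ipZr.
rewrite ip_center_D J_br ip_sumr; congr (_ * _); apply: eq_bigr => j _.
by rewrite ipZr (ipC g_sym (e j)) mulrC.
Qed.

Lemma lintr_D_mulJ v j : lintr (fun w => D w v *m J j) =
  - 2^-1 * \sum_i ip g (e i) v * \tr (J i *m J j).
Proof.
rewrite (eq_lintr (h := fun w => - 2^-1 *: (\sum_i ip g (e i) v *: (w *m (J i *m J j))
   + \sum_i ip g (e i) w *: (v *m J i *m J j)))).
  rewrite lintrZ lintrD !lintr_sum [X in _ + X]big1 ?addr0 => [|i _]; last first.
    by rewrite lintr_rank1 /= ?mulmxA ?ip_center_mulJ //; apply: ip_linear_r.
  by congr (_ * _); apply: eq_bigr => i _; rewrite lintrZ lintr_mx.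
move=> w; rewrite DE -scalemxAl !mulmxBl central_mulJ // sub0r.
rewrite /jmap !mulmx_suml -opprD scalerN scaleNr; congr (- (_ *: (_ + _))).
  by apply: eq_bigr => i _; rewrite -scalemxAl mulmxA.
by apply: eq_bigr => i _; rewrite -scalemxAl.
Qed.

Lemma lintr_jmap_Dr u v :
  lintr (fun w => jmap u (D w v)) = 2 * ip g (u *m Jplus g e J) v.
Proof.
rewrite /jmap lintr_sum ip_Jplus mulr_sumr; apply: eq_bigr => i _.
by rewrite lintrZ lintr_D_mulJ !mulr_sumr; apply: eq_bigr => j _; field.
Qed.

Lemma ricci_formula u v : ricci br D u v =
  ip g (u *m Jplus g e J) v + ip g (u *m Jminus g e J) v.
Proof.
rewrite /ricci /curv lintrD lintrB lintr_D_l addr0 lintr_D_br.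
rewrite (eq_lintr (h := fun w =>
  2^-1 *: (br u (D w v) - jmap (D w v) u - jmap u (D w v)))); last by move=> w; rewrite DE.
rewrite lintrZ !lintrB lintr_br_D lintr_jmap_Dl lintr_jmap_Dr; lra.
Qed.

Lemma mxtrace_Jplus : \tr (Jplus g e J) = - 2^-1 * \tr (Jminus g e J).
Proof.
rewrite /Jplus /Jminus mxtraceZ !raddf_sum mulrA mulr_sumr; apply: eq_bigr => i _.
rewrite !raddf_sum mulr_sumr; apply: eq_bigr => j _.
by rewrite /= !mxtraceZ mxtrace_rank1_mx (ipC g_sym (e j)); lra.
Qed.

End TwoStepNilpotent.

Theorem mainTheorem3 (R : realFieldType) (n : nat)
  (g : 'M[R]_n) (g_sym : g^T = g) (g_nondeg : g \in unitmx)
  (br : 'rV[R]_n -> 'rV[R]_n -> 'rV[R]_n)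
  (br_linl : forall (a : R) u v w, br (a *: u + v) w = a *: br u w + br v w)
  (br_linr : forall (a : R) u v w, br w (a *: u + v) = a *: br w u + br w v)
  (br_alt : forall u, br u u = 0)
  (br_jacobi : forall u v w,
      br u (br v w) + br v (br w u) + br w (br u v) = 0)
  (br_nonzero : exists u v, br u v != 0)
  (br_center : forall u v w, br (br u v) w = 0)
  (p : nat) (e : 'I_p -> 'rV[R]_n)
  (e_center : forall i w, br (e i) w = 0)
  (e_free : forall c : 'I_p -> R, \sum_(i < p) c i *: e i = 0 -> forall i, c i = 0)
  (e_span : forall z, (forall w, br z w = 0) ->
      exists c : 'I_p -> R, z = \sum_(i < p) c i *: e i)
  (J : 'I_p -> 'M[R]_n)
  (J_skew : forall i u v, ip g (u *m J i) v = - ip g u (v *m J i))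
  (J_br : forall u v, br u v = \sum_(i < p) ip g (u *m J i) v *: e i)
  (D : 'rV[R]_n -> 'rV[R]_n -> 'rV[R]_n)
  (D_def : forall u v w, 2 * ip g (D u v) w =
      ip g (br u v) w + ip g (br w u) v + ip g (br w v) u) :
  (forall u v, ricci br D u v =
      ip g (u *m Jplus g e J) v + ip g (u *m Jminus g e J) v) /\
  scal g br D = 2^-1 * \tr (Jminus g e J) /\
  scal g br D = - \tr (Jplus g e J).
Proof.
have ricciE := ricci_formula g_sym g_nondeg br_linl br_linr br_center
  e_center e_free J_skew J_br D_def.
have scalE : scal g br D = \tr (Jplus g e J) + \tr (Jminus g e J).
  rewrite /scal (@ricciOp_eq _ _ _ g_nondeg _ _ (Jplus g e J + Jminus g e J)) ?mxtraceD //.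
  by move=> u v; rewrite ricciE mulmxDr ipDl.
rewrite scalE (mxtrace_Jplus g_sym e J).
by split=> //; split; lra.
Qed.
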